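(* Let $a \geq 1$ and consider the scalar system $X_{n+1} = a X_n + Z_n - U_n$, $n=1,2,\ldots$, where $X_1, Z_1, Z_2, \ldots$ are independent real random variables and $X_1$ has a probability density. If an $M$-bin causal quantizer-controller makes the system stabilizable in probability, i.e. there is a bounded interval $\mathcal I \subset \mathbb{R}$ with $\limsup_{n\to\infty} \mathbb{P}[X_n \in \mathcal I] > 0$, then $M \geq \lceil a \rceil$.
   Context: An $M$-bin causal quantizer-controller is a sequence $\{\mathsf f_n, \mathsf g_n\}_{n=1}^\infty$ of (measurable) maps $\mathsf f_n \colon \mathbb{R}^n \to [M] = \{1,\ldots,M\}$ and $\mathsf g_n \colon [M]^n \to \mathbb{R}$; the control at time $n$ is $U_n = \mathsf g_n(\mathsf f_1(X_1), \mathsf f_2(X_1,X_2), \ldots, \mathsf f_n(X_1,\ldots,X_n))$. *)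

From HB Require Import structures.
From mathcomp Require Import all_boot all_order all_algebra.
From mathcomp Require Import all_classical all_reals.
From mathcomp Require Import ereal topology normedtype sequences measure
  lebesgue_measure lebesgue_integral probability.
Set Implicit Arguments. Unset Strict Implicit. Unset Printing Implicit Defensive.
Import Order.TTheory GRing.Theory Num.Theory.
Local Open Scope classical_set_scope.
Local Open Scope ring_scope.

(* Time is indexed from 0: our index k corresponds to the paper's time k+1. *)

Definition mutually_independent d (T : measurableType d) (R : realType)
  (P : probability T R) (W : nat -> T -> R) : Prop :=
  forall (s : seq nat) (B : nat -> set R), uniq s ->
    (forall i, measurable (B i)) ->
    P (\bigcap_(i in [set` s]) (W i @^-1` B i)) =
    (\prod_(i <- s) P (W i @^-1` B i))%E.

Definition has_density d (T : measurableType d) (R : realType)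
  (P : probability T R) (X : T -> R) : Prop :=
  exists f : R -> R, measurable_fun setT f /\ (forall x, 0 <= f x) /\
    forall A : set R, measurable A ->
      P (X @^-1` A) = (\int[lebesgue_measure]_(x in A) (f x)%:E)%E.

(* Measurability of an encoder R^(n+1) -> [M] (discrete sigma-algebra on [M]). *)
Definition measurable_encoder (R : realType) (M n : nat)
  (f : (n.+1).-tuple R -> 'I_M) : Prop :=
  forall k : 'I_M, measurable [set x : (n.+1).-tuple R | f x = k].

(* Joint history of states (x_0, ..., x_n) and quantizer outputs
   (q_0, ..., q_n), with q_k = f_k(x_0..x_k), u_k = g_k(q_0..q_k) and
   x_{k+1} = a x_k + z_k - u_k. *)
Fixpoint history (R : realType) (M : nat) (a : R)
  (f : forall n : nat, (n.+1).-tuple R -> 'I_M)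
  (g : forall n : nat, (n.+1).-tuple 'I_M -> R)
  (x0 : R) (z : nat -> R) (n : nat) : (n.+1).-tuple R * (n.+1).-tuple 'I_M :=
  match n with
  | 0 => let s := [tuple x0] in (s, [tuple f 0 s])
  | m.+1 =>
      let sc := history a f g x0 z m in
      let x := a * tnth sc.1 ord_max + z m - g m sc.2 in
      let s' := [tuple of rcons sc.1 x] in
      (s', [tuple of rcons sc.2 (f m.+1 s')])
  end.

Definition state d (T : measurableType d) (R : realType) (M : nat) (a : R)
  (f : forall n : nat, (n.+1).-tuple R -> 'I_M)
  (g : forall n : nat, (n.+1).-tuple 'I_M -> R)
  (X1 : T -> R) (Z : nat -> T -> R) (n : nat) (w : T) : R :=
  tnth (history a f g (X1 w) (fun k => Z k w) n).1 ord_max.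

From HB Require Import structures.
From mathcomp Require Import all_boot all_order all_algebra.
From mathcomp Require Import all_classical all_reals.
From mathcomp Require Import ereal topology normedtype sequences measure
  lebesgue_measure lebesgue_integral probability charge measurable_realfun.
From mathcomp Require Import ring lra.
Set Implicit Arguments. Unset Strict Implicit. Unset Printing Implicit Defensive.
Import Order.TTheory GRing.Theory Num.Theory.
Local Open Scope classical_set_scope.
Local Open Scope ring_scope.

(* Unrolling the loop gives
     X_{n+1} = a^{n+1} X_1 + sum_(k <= n) a^(n-k) Z_k - C_n(Q_0, ..., Q_n)
   where the correction C_n only sees the M^{n+1} possible code words.  Round
   every Z_k down to a grid of mesh 1 / sum_(k <= n) a^k: on the event that the
   grid indices of Z_0, ..., Z_n are fixed, the noise term is known up to an
   error in [0, 1], so X_{n+1} in [c, e] confines X_1 to a union of M^{n+1}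
   intervals of length (e - c + 1) / a^{n+1}.  These events are independent of
   X_1, so P[X_{n+1} in [c, e]] is at most the largest probability that X_1
   falls in a set of that Lebesgue measure.  When M < a the measure tends to 0,
   and so does the probability, by absolute continuity of the law of X_1. *)

Section TupleRcons.
Variable A : Type.

Definition tuple_belast n (t : (n.+1).-tuple A) : n.-tuple A :=
  [tuple of belast (thead t) (behead t)].

Lemma tnth_rcons n (s : n.-tuple A) x (i : 'I_n.+1) :
  tnth [tuple of rcons s x] i = nth x s i.
Proof.
rewrite (tnth_nth x) /= nth_rcons size_tuple.
by case: ltnP => // ni; rewrite nth_default ?size_tuple //; case: eqP.
Qed.

Lemma tnth_rcons_last n (s : n.-tuple A) x : tnth [tuple of rcons s x] ord_max = x.
Proof. by rewrite tnth_rcons nth_default ?size_tuple. Qed.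

Lemma tuple_belast_rcons n (s : n.-tuple A) x : tuple_belast [tuple of rcons s x] = s.
Proof.
apply: val_inj => /=; case: s => -[|y s] sz //=.
by rewrite [thead _](tnth_nth x) /= belast_rcons.
Qed.

Lemma rcons_tuple_belast n (t : (n.+1).-tuple A) :
  [tuple of rcons (tuple_belast t) (tnth t ord_max)] = t.
Proof.
apply: val_inj => /=; case: t => -[|y s] sz //=.
rewrite [thead _](tnth_nth y) (tnth_nth y) /=.
by move: sz => /eqP[<-]; rewrite (nth_last y (y :: s)) /= -lastI.
Qed.

End TupleRcons.

Section MeasurableTuples.
Context d1 d2 (T : measurableType d1) (U : measurableType d2).

Lemma measurable_fun_finite_fibers (F : finType) (h : T -> F) (G : F -> U) :
  (forall y, measurable (h @^-1` [set y])) -> measurable_fun setT (G \o h).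
Proof.
move=> mh _ B mB; rewrite setTI.
have -> : (G \o h) @^-1` B = \big[setU/set0]_(y <- enum F | `[< B (G y) >]) h @^-1` [set y].
  rewrite -bigcup_seq_cond; apply/seteqP; split => [w Bw|w [y /andP[_ /asboolP By] /= ->] //].
  by exists (h w); rewrite //= mem_enum; exact/asboolP.
exact: bigsetU_measurable.
Qed.

Lemma measurable_fun_rcons_tuple n (s : T -> n.-tuple U) (x : T -> U) :
  measurable_fun setT s -> measurable_fun setT x ->
  measurable_fun setT (fun w => [tuple of rcons (s w) (x w)]).
Proof.
move=> /measurable_fun_tnthP ms mx; apply/measurable_fun_tnthP => i /=.
rewrite (_ : _ \o _ = fun w => nth (x w) (s w) i); last first.
  by apply/funext => w /=; rewrite tnth_rcons.
have [lt_in|le_ni] := ltnP i n; last first.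
  by rewrite (_ : (fun w => _) = x) //; apply/funext => w; rewrite nth_default ?size_tuple.
rewrite (_ : (fun w => _) = (fun t => tnth t (Ordinal lt_in)) \o s) //.
by apply/funext => w /=; rewrite (tnth_nth (x w)).
Qed.

End MeasurableTuples.

Lemma measure_bigsetU_le d (R : realFieldType) (T : ringOfSetsType d)
    (mu : {measure set T -> \bar R}) (I : Type) (s : seq I) (F : I -> set T) :
  (forall i, measurable (F i)) ->
  (mu (\big[setU/set0]_(i <- s) F i) <= \sum_(i <- s) mu (F i))%E.
Proof.
move=> mF; elim: s => [|i s IHs]; first by rewrite !big_nil measure0.
rewrite !big_cons; apply: le_trans (measureU2 _ (mF i) _) _.
  exact: bigsetU_measurable.
exact: leeD.
Qed.

Section ProbabilityBounds.
Context d (T : measurableType d) (R : realType) (P : probability T R).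

Lemma le_probability_fiberwise (I : countType) (h : T -> I) (F : I -> set T)
    (S : set T) (eta : R) :
  0 <= eta -> measurable S ->
  (forall j, measurable (h @^-1` [set j])) -> (forall j, measurable (F j)) ->
  (forall j, P (F j `&` h @^-1` [set j]) <= eta%:E * P (h @^-1` [set j]))%E ->
  (forall w, S w -> F (h w) w) ->
  (P S <= eta%:E)%E.
Proof.
move=> eta0 mS mh mF leF SF.
pose E m := if pickle_inv m is Some j then h @^-1` [set j] else set0.
pose G m := if pickle_inv m is Some j then F j `&` h @^-1` [set j] else set0.
have mE m : measurable (E m) by rewrite /E; case: pickle_inv.
have mG m : measurable (G m) by rewrite /G; case: pickle_inv => // j; exact: measurableI.
have trivE : trivIset setT E.
  move=> m m' _ _ [w []]; rewrite /E.
  case Em: (pickle_inv m) => [j|] // hj; case Em': (pickle_inv m') => [j'|] // hj'.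
  by rewrite -(@pickle_invK I m) -(@pickle_invK I m') Em Em' /= -hj -hj'.
have SG : S `<=` \bigcup_m G m.
  by move=> w Sw; exists (pickle (h w)) => //; rewrite /G pickleK_inv; split => //; exact: SF.
apply: le_trans (measure_sigma_subadditive P mG mS SG) _.
apply: (@le_trans _ _ (\sum_(0 <= m <oo) (eta%:E * P (E m)))%E).
  apply: lee_nneseries => // m _; rewrite /G /E.
  case: pickle_inv => [j|]; [exact: leF | by rewrite !measure0 mule0].
rewrite nneseriesZl // -measure_semi_bigcup //; last exact: bigcup_measurable.
by rewrite -[leRHS]mule1 lee_wpmul2l ?lee_fin // probability_le1 //; exact: bigcup_measurable.
Qed.

Lemma density_absolutely_continuous (X : {RV P >-> R}) : has_density P X ->
  forall eps, 0 < eps -> exists2 delta, 0 < delta &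
    forall A, measurable A -> (lebesgue_measure A < delta%:E)%E ->
      (P (X @^-1` A) <= eps%:E)%E.
Proof.
move=> [dens [mdens [dens_ge0 PX]]] eps eps0.
have PX_norm A : measurable A ->
    P (X @^-1` A) = (\int[lebesgue_measure]_(x in A) `|dens x|%:E)%E.
  by move=> mA; rewrite PX //; apply: eq_integral => x _; rewrite ger0_norm.
have int_dens : lebesgue_measure.-integrable setT (EFin \o dens).
  apply/integrableP; split; first exact/measurable_EFinP.
  by rewrite -PX_norm // preimage_setT probability_setT ltry.
have [delta [delta0 small]] := integral_normr_continuous int_dens eps0.
exists delta => // A mA lt_delta.
rewrite PX_norm // -[leLHS]fineK; last first.
  by rewrite -PX_norm // fin_num_measure //; exact: measurable_funPTI.
by rewrite lee_fin; apply/ltW/small.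
Qed.

End ProbabilityBounds.

Lemma limn_esup_le_eventually (R : realType) (u : (\bar R)^nat) (l : \bar R) N :
  (forall n, (N <= n)%N -> (u n <= l)%E) -> (limn_esup u <= l)%E.
Proof.
move=> ul; rewrite limn_esup_lim (cvg_lim _ (@cvg_esups_inf R u)) //.
apply: le_trans (ereal_inf_lbound _) _; first by exists N.
by apply: ge_ereal_sup => _ [m /= Nm <-]; exact: ul.
Qed.

Lemma expr_eventually_lt (R : realType) (r eps : R) : 0 <= r < 1 -> 0 < eps ->
  exists N, forall n, (N <= n)%N -> r ^+ n < eps.
Proof.
move=> /andP[r0 r1] eps0; rewrite -(ger0_norm r0) in r1.
have [N _ small] := cvgr0_norm_lt _ (cvg_expr r1) _ eps0.
by exists N => n /small /=; rewrite ger0_norm // exprn_ge0.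
Qed.

Lemma in_iota1 m i : [set` iota 1 m] i = (0 < i <= m)%N.
Proof. by rewrite /= mem_iota add1n ltnS. Qed.

Lemma mutually_independent_head d (T : measurableType d) (R : realType)
    (P : probability T R) (W : nat -> T -> R) m (A : set R) (B : nat -> set R) :
  mutually_independent P W -> measurable A -> (forall i, measurable (B i)) ->
  P (W 0%N @^-1` A `&` \bigcap_(i in [set` iota 1 m]) W i @^-1` B i) =
  (P (W 0%N @^-1` A) * P (\bigcap_(i in [set` iota 1 m]) W i @^-1` B i))%E.
Proof.
move=> indep mA mB; pose B' i := if i is _.+1 then B i else A.
have mB' i : measurable (B' i) by case: i => [|i] //; exact: mB.
have tailE : \bigcap_(i in [set` iota 1 m]) W i @^-1` B i =
    \bigcap_(i in [set` iota 1 m]) W i @^-1` B' i.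
  by apply: eq_bigcapr => -[|i] //; rewrite in_iota1.
rewrite tailE (indep _ _ (iota_uniq 1 m) mB').
have -> : W 0%N @^-1` A `&` \bigcap_(i in [set` iota 1 m]) W i @^-1` B' i =
    \bigcap_(i in [set` iota 0 m.+1]) W i @^-1` B' i.
  by rewrite !bigcap_seq big_cons.
by rewrite (indep _ _ (iota_uniq 0 m.+1) mB') big_cons.
Qed.

Definition discounted_sum (R : pzSemiRingType) (a : R) (z : nat -> R) n :=
  \sum_(k < n.+1) a ^+ (n - k) * z k.

Section DiscountedSum.
Variables (R : realFieldType) (a : R).
Hypothesis a_ge0 : 0 <= a.

Lemma discounted_sumS z n :
  discounted_sum a z n.+1 = a * discounted_sum a z n + z n.+1.
Proof.
rewrite /discounted_sum big_ord_recr subnn expr0 mul1r mulr_sumr; congr (_ + _).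
by apply: eq_bigr => k _; rewrite /= mulrA -exprS subSn // -ltnS.
Qed.

Lemma ler_discounted_sum z z' n : (forall k, (k <= n)%N -> z k <= z' k) ->
  discounted_sum a z n <= discounted_sum a z' n.
Proof.
move=> zz'; apply: ler_sum => k _.
by apply: ler_wpM2l; [exact: exprn_ge0 | apply: zz'; rewrite -ltnS].
Qed.

Lemma discounted_sumDc z c n : discounted_sum a (fun k => z k + c) n =
  discounted_sum a z n + c * discounted_sum a (fun=> 1) n.
Proof.
rewrite /discounted_sum mulr_sumr -big_split; apply: eq_bigr => k _ /=.
by rewrite mulrDr mulr1 [c * _]mulrC.
Qed.

Lemma discounted_sum1_gt0 n : 0 < discounted_sum a (fun=> 1) n.
Proof.
rewrite /discounted_sum big_ord_recr /= subnn expr0 mulr1.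
by rewrite ltr_pwDr // sumr_ge0 // => k _; rewrite mulr1 exprn_ge0.
Qed.

Lemma discounted_sum_sandwich lo z c n :
  (forall k, (k <= n)%N -> lo k <= z k <= lo k + c) ->
  discounted_sum a lo n <= discounted_sum a z n <=
    discounted_sum a lo n + c * discounted_sum a (fun=> 1) n.
Proof.
move=> lozc; apply/andP; split; first by apply: ler_discounted_sum => k /lozc /andP[].
by rewrite -discounted_sumDc; apply: ler_discounted_sum => k /lozc /andP[].
Qed.

End DiscountedSum.

Section Grid.
Variables (R : archiRealFieldType) (delta : R).
Hypothesis delta_gt0 : 0 < delta.

Definition grid_cell (m : int) : set R :=
  [set` Interval (BLeft (m%:~R * delta)) (BLeft ((m + 1)%:~R * delta))].

Definition grid_index n (z : nat -> R) : (n.+1).-tuple int :=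
  [tuple Num.floor (z i / delta) | i < n.+1].

Definition grid_point (j : seq int) k : R := (nth 0 j k)%:~R * delta.

Lemma floor_div_grid_cell x m : Num.floor (x / delta) = m <-> grid_cell m x.
Proof.
rewrite /grid_cell /= in_itv /= -ler_pdivlMr // -ltr_pdivrMr //.
by rewrite -floor_eq; split => [->|/eqP].
Qed.

Lemma nth_grid_index n z k : (k < n.+1)%N ->
  nth 0 (grid_index n z) k = Num.floor (z k / delta).
Proof. by move=> lt_kn; rewrite -[k]/(nat_of_ord (Ordinal lt_kn)) -tnth_nth tnth_mktuple. Qed.

Lemma grid_indexP n z j :
  grid_index n z = j <-> forall k, (k < n.+1)%N -> grid_cell (nth 0 j k) (z k).
Proof.
split=> [<- k lt_kn|zj]; first by apply/floor_div_grid_cell; rewrite nth_grid_index.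
apply: eq_from_tnth => i; rewrite tnth_mktuple (tnth_nth 0).
exact/floor_div_grid_cell/zj.
Qed.

Lemma grid_point_le n z k : (k <= n)%N ->
  grid_point (grid_index n z) k <= z k <= grid_point (grid_index n z) k + delta.
Proof.
move=> le_kn; rewrite /grid_point nth_grid_index //.
have /floor_div_grid_cell := erefl (Num.floor (z k / delta)).
by rewrite /grid_cell /= in_itv /= intrD mulrDl mul1r => /andP[-> /ltW].
Qed.

End Grid.

Lemma lebesgue_measure_bigsetU_itv (R : realType) (I : finType) (l r : I -> R) L :
  0 <= L -> (forall i, r i - l i <= L) ->
  (lebesgue_measure (\big[setU/set0]_(i : I) [set` Interval (BLeft (l i)) (BRight (r i))])
    <= (#|I|%:R * L)%:E)%E.
Proof.
move=> L0 lrL.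
apply: le_trans (measure_bigsetU_le lebesgue_measure _ (fun i => measurable_itv _)) _.
have -> : (#|I|%:R * L)%:E = (\sum_(i : I) L%:E)%E by rewrite sumEFin sumr_const mulr_natl.
apply: lee_sum => i _.
rewrite -[leLHS]/(lebesgue_measure [set` Interval (BLeft (l i)) (BRight (r i))]).
rewrite lebesgue_measure_itv /=; case: ifP => _; last by rewrite lee_fin.
by rewrite -EFinD lee_fin lrL.
Qed.

Section ClosedLoop.
Variables (d : measure_display) (T : measurableType d) (R : realType).
Variables (P : probability T R) (a : R) (X1 : {RV P >-> R}) (Z : nat -> {RV P >-> R}).
Variables (M : nat) (f : forall n : nat, (n.+1).-tuple R -> 'I_M).
Variable g : forall n : nat, (n.+1).-tuple 'I_M -> R.
Arguments f : clear implicits.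
Arguments g : clear implicits.

Definition state_path n w := (history a f g (X1 w) (fun k => Z k w) n).1.
Definition code_path n w := (history a f g (X1 w) (fun k => Z k w) n).2.

Local Notation X := (state a f g X1 (fun k => Z k)).

Lemma state_pathS n w : state_path n.+1 w =
  [tuple of rcons (state_path n w) (a * X n w + Z n w - g n (code_path n w))].
Proof. by []. Qed.

Lemma code_pathS n w :
  code_path n.+1 w = [tuple of rcons (code_path n w) (f n.+1 (state_path n.+1 w))].
Proof. by []. Qed.

Lemma stateS n w : X n.+1 w = a * X n w + Z n w - g n (code_path n w).
Proof. by rewrite /state -/(state_path _ _) state_pathS tnth_rcons_last. Qed.

Lemma state_closed_form n : exists C : (n.+1).-tuple 'I_M -> R, forall w,
  X n.+1 w = a ^+ n.+1 * X1 w + discounted_sum a (fun k => Z k w) n - C (code_path n w).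
Proof.
elim: n => [|n [C HC]].
  by exists (g 0%N) => w; rewrite stateS /discounted_sum big_ord1 expr1 expr0 mul1r.
exists (fun t => a * C (tuple_belast t) + g n.+1 t) => w.
by rewrite stateS HC code_pathS tuple_belast_rcons discounted_sumS !exprS; ring.
Qed.

Lemma code_path0_fiber t :
  code_path 0 @^-1` [set t] = state_path 0 @^-1` [set x | f 0%N x = thead t].
Proof.
apply/seteqP; split => w /= => [<-|fw].
  by rewrite [thead _](tnth_nth (f 0%N (state_path 0 w))).
apply: eq_from_tnth => i; rewrite ord1 -[tnth t ord0]/(thead t) -fw.
by rewrite (tnth_nth (thead t)).
Qed.

Lemma code_pathS_fiber n t : code_path n.+1 @^-1` [set t] =
  code_path n @^-1` [set tuple_belast t] `&`
  state_path n.+1 @^-1` [set x | f n.+1 x = tnth t ord_max].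
Proof.
apply/seteqP; split => w /=; rewrite code_pathS.
  by move=> <-; rewrite tuple_belast_rcons tnth_rcons_last.
by move=> [-> ->]; rewrite rcons_tuple_belast.
Qed.

Hypothesis f_measurable : forall n, measurable_encoder (f n).

Lemma measurable_history n : measurable_fun setT (state_path n) /\
  forall t, measurable (code_path n @^-1` [set t]).
Proof.
have encoder_fiber n' (s : T -> (n'.+1).-tuple R) k : measurable_fun setT s ->
    measurable (s @^-1` [set x | f n' x = k]).
  by move=> ms; rewrite -[_ @^-1` _]setTI; apply: ms => //; exact: f_measurable.
elim: n => [|n [ms mc]].
  have ms : measurable_fun setT (state_path 0).
    apply/measurable_fun_tnthP => i; rewrite ord1.
    by rewrite (_ : _ \o _ = X1) //; apply/funext => w; rewrite /= (tnth_nth 0).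
  by split=> // t; rewrite code_path0_fiber; exact: encoder_fiber.
have ms' : measurable_fun setT (state_path n.+1).
  rewrite (funext (state_pathS n)); apply: measurable_fun_rcons_tuple => //.
  apply: measurable_funB; last exact: (measurable_fun_finite_fibers (g n) mc).
  apply: measurable_funD => //; apply: measurable_funM => //.
  by move/measurable_fun_tnthP : ms; apply.
by split=> // t; rewrite code_pathS_fiber; apply: measurableI; [exact: mc | exact: encoder_fiber].
Qed.

Lemma measurable_state n B : measurable B -> measurable (X n @^-1` B).
Proof.
move=> mB; have /measurable_fun_tnthP/(_ ord_max) mX := (measurable_history n).1.
by rewrite -[_ @^-1` _]setTI; exact: mX.
Qed.

Local Notation W := (fun i => if i is k.+1 then (Z k : T -> R) else (X1 : T -> R)).
Hypothesis indep : mutually_independent P W.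

Section NoiseGrid.
Variables (delta : R) (n : nat).
Hypothesis delta_gt0 : 0 < delta.

Local Notation grid w := (grid_index delta n (fun k => Z k w)).

Lemma grid_fiber j : (fun w => grid w) @^-1` [set j] =
  \bigcap_(i in [set` iota 1 n.+1]) W i @^-1` grid_cell delta (nth 0 j i.-1).
Proof.
apply/seteqP; split => w.
  by move/(grid_indexP delta_gt0) => zj [|k]; rewrite in_iota1 // ltnS => /zj.
move=> wj; apply/(grid_indexP delta_gt0) => k lt_kn.
by apply: (wj k.+1); rewrite in_iota1.
Qed.

Lemma measurable_grid_fiber j : measurable ((fun w => grid w) @^-1` [set j]).
Proof.
rewrite grid_fiber; apply: bigcap_measurable => [|i _]; first by exists 1%N; rewrite in_iota1.
rewrite -[_ @^-1` _]setTI; case: i => [|k]; apply: measurable_funP => //; exact: measurable_itv.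
Qed.

Lemma independent_state0_grid A j : measurable A ->
  P (X1 @^-1` A `&` (fun w => grid w) @^-1` [set j]) =
  (P (X1 @^-1` A) * P ((fun w => grid w) @^-1` [set j]))%E.
Proof.
move=> mA; rewrite grid_fiber.
pose B i := grid_cell delta (nth 0 j i.-1).
exact: (mutually_independent_head n.+1 indep mA (fun i => measurable_itv _ : measurable (B i))).
Qed.

End NoiseGrid.

Hypothesis a_gt0 : 0 < a.

Lemma prob_state_itv_le n (b1 b2 : bool) (c e eta : R) : 0 <= eta ->
  (forall A, measurable A ->
    (lebesgue_measure A <= (M%:R ^+ n.+1 * ((`|e - c| + 1) / a ^+ n.+1))%:E)%E ->
    (P (X1 @^-1` A) <= eta%:E)%E) ->
  (P (X n.+1 @^-1` [set` Interval (BSide b1 c) (BSide b2 e)]) <= eta%:E)%E.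
Proof.
move=> eta0 smallA; have [C HC] := state_closed_form n.
have sub_cc : [set` Interval (BSide b1 c) (BSide b2 e)] `<=` [set` `[c, e]].
  by apply: subset_itv; rewrite bnd_simp ?implybT.
have p_gt0 : 0 < a ^+ n.+1 by rewrite exprn_gt0.
have sum1_gt0 := discounted_sum1_gt0 (ltW a_gt0) n.
pose delta := (discounted_sum a (fun=> 1) n)^-1.
have delta_gt0 : 0 < delta by rewrite invr_gt0.
pose s0 j := discounted_sum a (grid_point delta j) n.
pose A (j : (n.+1).-tuple int) := \big[setU/set0]_(t : (n.+1).-tuple 'I_M)
  [set` Interval (BLeft ((c - s0 j - 1 + C t) / a ^+ n.+1))
                 (BRight ((e - s0 j + C t) / a ^+ n.+1))].
have mA j : measurable (A j) by apply: bigsetU_measurable => t _; exact: measurable_itv.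
apply: (le_probability_fiberwise (h := fun w => grid_index delta n (fun k => Z k w))
  (F := fun j => X1 @^-1` A j)) => //.
- by apply: measurable_state; exact: measurable_itv.
- exact: measurable_grid_fiber.
- by move=> j; rewrite -[_ @^-1` _]setTI; exact: measurable_funP.
- move=> j; rewrite independent_state0_grid // lee_wpmul2r //.
  apply: smallA; first exact: mA.
  apply: le_trans (lebesgue_measure_bigsetU_itv (L := (`|e - c| + 1) / a ^+ n.+1) _ _) _.
  + by rewrite divr_ge0 ?ltW // addr_ge0.
  + move=> t; rewrite -mulrBl ler_pM2r ?invr_gt0 //.
    by have := ler_norm (e - c); lra.
  + by rewrite card_tuple card_ord natrX.
- move=> w /sub_cc; rewrite /= in_itv /= HC => /andP[ce_lo ce_hi].
  have /andP[s0_le le_s0] := discounted_sum_sandwich (ltW a_gt0)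
    (grid_point_le delta_gt0 (n := n) (fun k => Z k w)).
  rewrite mulVf ?lt0r_neq0 // in le_s0.
  rewrite /A -bigcup_seq; exists (code_path n w); first exact: mem_index_enum.
  rewrite /= in_itv /= ler_pdivrMr // ler_pdivlMr // [X1 w * _]mulrC /s0.
  by apply/andP; split; lra.
Qed.

End ClosedLoop.

Theorem theorem3 (d : measure_display) (T : measurableType d) (R : realType)
  (P : probability T R) (a : R) (X1 : {RV P >-> R}) (Z : nat -> {RV P >-> R})
  (M : nat)
  (f : forall n : nat, (n.+1).-tuple R -> 'I_M)
  (g : forall n : nat, (n.+1).-tuple 'I_M -> R) :
  1 <= a ->
  mutually_independent P (fun i => if i is k.+1 then (Z k : T -> R) else X1) ->
  has_density P X1 ->
  (forall n, measurable_encoder (f n)) ->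
  (exists (b1 b2 : bool) (c e : R),
      (0 < limn_esup (fun n =>
         P (state a f g X1 (fun k => Z k) n @^-1`
              [set` Interval (BSide b1 c) (BSide b2 e)])))%E) ->
  Num.ceil a <= M%:Z.
Proof.
move=> a_ge1 indep dens f_measurable [b1 [b2 [c [e limsup_gt0]]]].
rewrite ceil_le_int leNgt; apply/negP => M_lt_a.
have a_gt0 : 0 < a by rewrite (lt_le_trans ltr01).
set u := (fun n => _ : \bar R) in limsup_gt0.
suff : (limn_esup u <= 0)%E by rewrite leNgt limsup_gt0.
apply/lee_addgt0Pr => eps eps_gt0; rewrite add0e.
have [delta delta_gt0 small_prob] := density_absolutely_continuous dens eps_gt0.
pose L := `|e - c| + 1.
have L_gt0 : 0 < L by rewrite ltr_pwDr.
have ratio_lt1 : 0 <= M%:R / a < 1.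
  by rewrite divr_ge0 ?ler0n ?ltW //= (ltr_pdivrMr _ _ a_gt0) mul1r.
have [N small_pow] := expr_eventually_lt ratio_lt1 (divr_gt0 delta_gt0 L_gt0).
apply: (limn_esup_le_eventually (N := N.+1)) => -[//|n] /ltnW/small_pow ratio_small.
apply: (prob_state_itv_le g f_measurable indep a_gt0 _ _ (ltW eps_gt0)) => A mA le_A.
apply: small_prob mA (le_lt_trans le_A _); rewrite lte_fin -/L.
have -> : M%:R ^+ n.+1 * (L / a ^+ n.+1) = (M%:R / a) ^+ n.+1 * L.
  by rewrite exprMn exprVn; ring.
by rewrite -ltr_pdivlMr.
Qed.
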